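(* Let $K$ be a finite field, let $L$ be the quadratic extension of $K$, and let $d$ be an integer with $\gcd(d,|L|-1)=1$ that is degenerate over $K$. Then $W_{L,d}(a)\ge 0$ for all $a\in K$.
   Context: Let $p$ be the characteristic. $\psi_L(x)=\exp(2\pi i\,\mathrm{Tr}_{L/\mathbb{F}_p}(x)/p)$ and $W_{L,d}(a)=\sum_{x\in L}\psi_L(x^d+ax)$. $d$ is degenerate over $K$ if $d\equiv p^j\pmod{|K|-1}$ for some integer $j$. *)

From HB Require Import structures.
From mathcomp Require Import all_boot all_order all_algebra all_field.
From mathcomp Require Import reals trigo.
From mathcomp Require Import complex.
Set Implicit Arguments. Unset Strict Implicit. Unset Printing Implicit Defensive.
Import Order.TTheory GRing.Theory Num.Theory.
Local Open Scope ring_scope.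

Definition absTr (p : nat) (F : finFieldType) (x : F) : F :=
  \sum_(i < logn p #|F|) x ^+ (p ^ i).

(* The integer representative k in {0,...,p-1} of an element of the prime field
   (k%:R = y); defaults to 0 if y is not in the prime field. *)
Definition primeRep (p : nat) (F : finFieldType) (y : F) : nat :=
  oapp (@nat_of_ord p) 0%N [pick k : 'I_p | (k%:R == y)].

(* psi_F(x) = exp(2 pi i Tr(x)/p), as a complex number cos + i sin. *)
Definition psi (R : realType) (p : nat) (F : finFieldType) (x : F) : R[i] :=
  let t : R := (2 * pi * (primeRep p (absTr p x))%:R) / p%:R in
  Complex (cos t) (sin t).

Definition WLd (R : realType) (p : nat) (F : finFieldType) (d : nat) (a : F) : R[i] :=
  \sum_(x : F) psi R p (x ^+ d + a * x).

From HB Require Import structures.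
From mathcomp Require Import all_boot all_order all_algebra all_field.
From mathcomp Require Import reals trigo.
From mathcomp Require Import complex.
From mathcomp Require Import ring zify.
Import Order.TTheory GRing.Theory Num.Theory.
Local Open Scope ring_scope.

Set Implicit Arguments.
Unset Strict Implicit.

(* Let q = |K|.  For c in K^*, the substitution x |-> c x gives
   W(a) = sum_x psi(c^d x^d + a c x), and on K the power map c |-> c^d is the
   automorphism c |-> c^(p^j).  So for each x in L, c |-> psi(c^(p^j) x^d + a c x)
   is an additive character of K, and summing over c in K yields
   q^2 + (q - 1) W(a) = q N, where N counts the x for which it is trivial.
   Every x with x^q = -x gives a trivial character (its arguments have trace 0,
   since (-1)^d = -1 when d is prime to |L| - 1), and there are at least q such x:
   they form the kernel of the additive map x |-> x^q + x, whose image has at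
   most q elements.  Hence (q - 1) W(a) = q N - q^2 >= 0. *)

Lemma card_fixed_expr_le (F : finFieldType) n :
  (1 < n)%N -> (#|[pred y : F | y ^+ n == y]| <= n)%N.
Proof.
move=> n_gt1.
have size_P : size ('X^n - 'X : {poly F}) = n.+1.
  by rewrite size_polyDl ?size_polyXn // size_polyN size_polyX.
have P_neq0 : ('X^n - 'X : {poly F}) != 0 by rewrite -size_poly_eq0 size_P.
rewrite -ltnS -size_P cardE; apply: max_poly_roots P_neq0 _ (enum_uniq _).
by apply/allP => y; rewrite mem_enum inE /root !hornerE subr_eq0.
Qed.

Lemma expr_modn_card1 (K : finFieldType) (c : K) m n :
  (0 < m)%N -> (0 < n)%N -> m = n %[mod #|K| - 1] -> c ^+ m = c ^+ n.
Proof.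
move=> m_gt0 n_gt0 mn; have [->|c_neq0] := eqVneq c 0.
  by rewrite !expr0n -!leqn0 leqNgt m_gt0 leqNgt n_gt0.
have c1 : c ^+ (#|K| - 1) = 1.
  apply: (mulIf c_neq0); rewrite mul1r -exprSr subn1 prednK ?expf_card //.
  exact/ltnW/finNzRing_gt1.
by rewrite -(expr_mod _ c1) mn (expr_mod _ c1).
Qed.

Lemma oppr1_expr_coprime (F : finFieldType) d :
  coprime d (#|F| - 1) -> (-1 : F) ^+ d = -1.
Proof.
move=> cop; have [d_odd|d_even] := boolP (odd d).
  by rewrite -signr_odd d_odd expr1.
have card_odd : odd (#|F| - 1).
  apply/negPn/negP => card_even; move: cop; rewrite /coprime.
  have : (2 %| gcdn d (#|F| - 1))%N by rewrite dvdn_gcd !dvdn2 d_even card_even.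
  by move=> /[swap] /eqP ->.
have m1_eq1 : (-1 : F) = 1.
  rewrite -{1}(expf_card (-1 : F)) -(subnK (ltnW (finNzRing_gt1 F))) exprD.
  by rewrite -signr_odd card_odd expr1 mulN1r opprK.
by rewrite m1_eq1 expr1n.
Qed.

Section PrimeCharacteristic.
Variables (F : finFieldType) (p : nat).
Hypothesis charFp : p \in [pchar F].

Lemma pnat_pchar_expn i : [pchar F].-nat (p ^ i)%N.
Proof.
by rewrite (eq_pnat _ (pcharf_eq charFp)) pnatX pnat_id ?(pcharf_prime charFp).
Qed.

Lemma natr_inj_pchar k l : (k < p)%N -> (l < p)%N -> k%:R = l%:R :> F -> k = l.
Proof.
wlog kl : k l / (k <= l)%N => [hwlog|k_lt l_lt kl_eq].
  by case: (leqP k l) => [|/ltnW] ? ? ? ?; [|symmetry]; apply: hwlog.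
have : (p %| l - k)%N by rewrite (dvdn_pcharf charFp) natrB // kl_eq subrr.
by rewrite -eqn_mod_dvd // !modn_small // => /eqP.
Qed.

Lemma pFrobenius_fixed_natr (y : F) : y ^+ p = y -> exists2 k, (k < p)%N & y = k%:R.
Proof.
move=> yp; set A := [set (k%:R : F) | k : 'I_p].
have cardA : #|A| = p.
  rewrite card_imset ?card_ord // => k l /natr_inj_pchar kl.
  exact/val_inj/kl.
have sub_A : A \subset [pred z : F | z ^+ p == z].
  apply/subsetP => _ /imsetP [k _ ->]; rewrite inE.
  by rewrite -pFrobenius_autE pFrobenius_aut_nat.
have /subsetP sub_Ar : [pred z : F | z ^+ p == z] \subset A.
  apply/idPn => /negbTE not_sub.
  have := card_fixed_expr_le F (prime_gt1 (pcharf_prime charFp)).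
  by rewrite leqNgt -{1}cardA (ltn_leqif (subset_leqif_card sub_A)) not_sub.
have /imsetP [k _ ->] : y \in A by apply: sub_Ar; rewrite inE yp.
by exists k.
Qed.

Lemma primeRep_natr k : (k < p)%N -> primeRep p (k%:R : F) = k.
Proof.
move=> k_lt; rewrite /primeRep; case: pickP => [l /eqP|] /=.
  exact: natr_inj_pchar (ltn_ord l) k_lt.
by move/(_ (Ordinal k_lt)); rewrite eqxx.
Qed.

Lemma absTrD (y z : F) : absTr p (y + z) = absTr p y + absTr p z.
Proof.
by rewrite -big_split; apply: eq_bigr => i _; rewrite exprDn_pchar ?pnat_pchar_expn.
Qed.

Lemma absTr0 : absTr p (0 : F) = 0.
Proof. by apply: (addrI (absTr p 0)); rewrite -absTrD !addr0. Qed.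

Lemma absTr_natr (y : F) : exists2 k, (k < p)%N & absTr p y = k%:R.
Proof.
apply: pFrobenius_fixed_natr; rewrite -pFrobenius_autE /absTr rmorph_sum /=.
set m := logn p #|F|.
have sum_recl : \sum_(i < m.+1) y ^+ (p ^ i) = y + \sum_(i < m) y ^+ (p ^ i.+1).
  by rewrite big_ord_recl expn0 expr1.
have sum_recr : \sum_(i < m.+1) y ^+ (p ^ i) = \sum_(i < m) y ^+ (p ^ i) + y.
  by rewrite big_ord_recr /= -(card_pprimeChar charFp) expf_card.
apply: (addrI y); rewrite -[RHS]addrC -sum_recr sum_recl; congr (_ + _).
by apply: eq_bigr => i _; rewrite pFrobenius_autE -exprM -expnSr.
Qed.

Lemma absTr_eq0_conj_opp n (y : F) :
  logn p #|F| = (n + n)%N -> y ^+ (p ^ n) = - y -> absTr p y = 0.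
Proof.
move=> logF yn; rewrite /absTr logF big_split_ord /= -big_split big1 // => i _.
by rewrite /= expnD exprM yn exprNn_pchar ?pnat_pchar_expn ?subrr.
Qed.

End PrimeCharacteristic.

Lemma sum_additive_char (V : finZmodType) (S : idomainType) (chi : V -> S) :
    {morph chi : u v / u + v >-> u * v} ->
  \sum_v chi v = if [forall v, chi v == 1] then #|V|%:R else 0.
Proof.
move=> chiD; case: ifP => [/forallP chi1 | /negbT].
  by rewrite (eq_bigr (fun _ => 1)) ?sumr_const // => v _; apply/eqP/chi1.
rewrite negb_forall => /existsP [u chi_u_neq1].
have sum_shift : \sum_v chi v = chi u * \sum_v chi v.
  rewrite [LHS](reindex_inj (addrI u)) mulr_sumr.
  by apply: eq_bigr => v _; apply: chiD.
apply/eqP; move/eqP: sum_shift; rewrite -subr_eq0 -{1}[\sum_v _]mul1r -mulrBl.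
by rewrite mulf_eq0 subr_eq0 eq_sym (negbTE chi_u_neq1).
Qed.

Lemma card_le_image_kernel (V W : finZmodType) (f : V -> W) :
    {morph f : u v / u - v} ->
  (#|V| <= #|[set f v | v : V]| * #|[set v | f v == 0%R]|)%N.
Proof.
move=> fB; pose g w := odflt 0 [pick v | f v == w].
have fgf v : f (g (f v)) = f v.
  by rewrite /g; case: pickP => [u /eqP //|/(_ v)]; rewrite eqxx.
pose h v := (f v, v - g (f v)).
have h_inj : injective h by move=> u v [fuv]; rewrite fuv => /addIr.
rewrite -cardsX -cardsT -(card_imset _ h_inj); apply: subset_leq_card.
apply/subsetP => _ /imsetP [v _ ->]; rewrite !inE /= imset_f //=.
by rewrite fB fgf subrr.
Qed.

Section ComplexExponential.
Context {R : realType}.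

Definition cis (t : R) : R[i] := Complex (cos t) (sin t).

Lemma cisD s t : cis (s + t) = cis s * cis t.
Proof. by rewrite /cis cosD sinD; simpc; congr Complex; rewrite addrC. Qed.

Lemma cis0 : cis 0 = 1.
Proof. by rewrite /cis cos0 sin0. Qed.

Lemma cisD2piMn t k : cis (t + 2 * pi * k%:R) = cis t.
Proof.
elim: k => [|k IHk]; first by rewrite mulr0 addr0.
have -> : t + 2 * pi * k.+1%:R = (t + 2 * pi * k%:R) + pi *+ 2.
  by rewrite mulrSr; ring.
by rewrite -[in RHS]IHk /cis cosD2pi sinD2pi.
Qed.

Lemma cis_modn p k : (0 < p)%N ->
  cis (2 * pi * (k %% p)%:R / p%:R) = cis (2 * pi * k%:R / p%:R).
Proof.
move=> p_gt0; have p_neq0 : (p%:R : R) != 0 by rewrite pnatr_eq0 -lt0n.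
set two_pi := 2 * pi; rewrite [in RHS](divn_eq k p) natrD natrM mulrDr mulrDl addrC.
by rewrite mulrA mulfK // cisD2piMn.
Qed.

End ComplexExponential.

Section AdditiveCharacter.
Variables (R : realType) (F : finFieldType) (p : nat).
Hypothesis charFp : p \in [pchar F].

Lemma psiE (y : F) : psi R p y = cis (2 * pi * (primeRep p (absTr p y))%:R / p%:R).
Proof. by []. Qed.

Lemma psiD (y z : F) : psi R p (y + z) = psi R p y * psi R p z.
Proof.
have p_gt0 : (0 < p)%N := prime_gt0 (pcharf_prime charFp).
have [k k_lt Tr_y] := absTr_natr charFp y; have [l l_lt Tr_z] := absTr_natr charFp z.
rewrite !psiE (absTrD charFp) Tr_y Tr_z -natrD -(GRing.natr_mod_pchar charFp).
rewrite !primeRep_natr ?ltn_pmod // cis_modn // -cisD.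
by rewrite natrD mulrDr mulrDl.
Qed.

Lemma psi_absTr0 (y : F) : absTr p y = 0 -> psi R p y = 1.
Proof.
move=> Tr_y; rewrite psiE Tr_y (primeRep_natr charFp (k := 0)).
  by rewrite mulr0 mul0r cis0.
exact/prime_gt0/(pcharf_prime charFp).
Qed.

End AdditiveCharacter.

Section QuadraticExtension.
Variables (R : realType) (K : finFieldType) (L : fieldExtType K) (p : nat).
Hypotheses (charKp : p \in [pchar K]) (dimL : \dim {: L} = 2%N).

Local Notation F := (FinFieldExtType L).
Local Notation q := #|K|.
Local Notation n := (logn p #|K|).

Lemma card_quadratic_ext : #|F| = (q * q)%N.
Proof.
have := card_vspace (fullv : {vspace finvect_type L}).
rewrite card_vspacef dimvf; move: dimL; rewrite dimvf => -> ->.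
by rewrite mulnn.
Qed.

Lemma pchar_quadratic_ext : p \in [pchar F].
Proof. by rewrite (pchar_lalg F). Qed.

Let card_base : q = (p ^ n)%N := card_pprimeChar charKp.

Lemma logn_card_quadratic_ext : logn p #|F| = (n + n)%N.
Proof.
by rewrite card_quadratic_ext lognM // (ltnW (finNzRing_gt1 K)).
Qed.

Lemma exprD_card_base (x y : F) : (x + y) ^+ q = x ^+ q + y ^+ q.
Proof. by rewrite card_base exprDn_pchar ?pnat_pchar_expn ?pchar_quadratic_ext. Qed.

Lemma exprN_card_base (x : F) : (- x) ^+ q = - x ^+ q.
Proof. by rewrite card_base exprNn_pchar ?pnat_pchar_expn ?pchar_quadratic_ext. Qed.

Lemma card_conj_opp_ge : (q <= #|[set x : F | x ^+ q == - x]|)%N.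
Proof.
have q_gt1 : (1 < q)%N := finNzRing_gt1 K.
pose f (x : F) := x ^+ q + x.
have fB : {morph f : x y / x - y}.
  by move=> x y; rewrite /f exprD_card_base exprN_card_base addrACA opprD.
have sub_fixed : [set f x | x : F] \subset [pred y : F | y ^+ q == y].
  apply/subsetP => _ /imsetP [x _ ->]; rewrite inE /f exprD_card_base -exprM.
  by rewrite -card_quadratic_ext expf_card addrC.
have img_le : (#|[set f x | x : F]| <= q)%N.
  exact: leq_trans (subset_leq_card sub_fixed) (card_fixed_expr_le F q_gt1).
have -> : [set x : F | x ^+ q == - x] = [set x | f x == 0].
  by apply/setP => x; rewrite !inE addr_eq0.
rewrite -(leq_pmul2l (ltnW q_gt1)) -card_quadratic_ext.
by rewrite (leq_trans (card_le_image_kernel fB)) // leq_mul2r img_le orbT.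
Qed.

Variables (d j : nat) (a : K).
Hypothesis oppr1_exprd : (-1 : F) ^+ d = -1.
Hypothesis exprd_base : forall c : K, c ^+ d = c ^+ (p ^ j).

Local Notation W := (WLd R p d (a%:A : F)).

Definition twisted_char (x : F) (c : K) : R[i] :=
  psi R p (((c ^+ (p ^ j))%:A : F) * x ^+ d + ((a * c)%:A : F) * x).

Local Notation trivial_points := [set x : F | [forall c, twisted_char x c == 1]].

Lemma twisted_charD x : {morph twisted_char x : c1 c2 / c1 + c2 >-> c1 * c2}.
Proof.
move=> c1 c2; rewrite /twisted_char -psiD ?pchar_quadratic_ext //.
by rewrite exprDn_pchar ?pnat_pchar_expn // mulrDr !scalerDl !mulrDl addrACA.
Qed.

Lemma twisted_char0 x : twisted_char x 0 = 1.
Proof.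
rewrite /twisted_char expr0n expn_eq0 eqn0Ngt prime_gt0 ?(pcharf_prime charKp) //=.
rewrite mulr0 !scale0r !mul0r addr0 (psi_absTr0 _ pchar_quadratic_ext) //.
exact: absTr0 pchar_quadratic_ext.
Qed.

Lemma twisted_char_conj_opp x : x ^+ q = - x -> forall c, twisted_char x c = 1.
Proof.
move=> xq c; apply: (psi_absTr0 R pchar_quadratic_ext).
have algq (b : K) : (b%:A : F) ^+ q = b%:A by rewrite -in_algE -rmorphXn expf_card.
apply: (absTr_eq0_conj_opp pchar_quadratic_ext logn_card_quadratic_ext).
rewrite -card_base exprD_card_base !exprMn !algq -exprM mulnC exprM xq.
by rewrite exprNn oppr1_exprd mulN1r !mulrN opprD.
Qed.

Lemma sum_twisted_char c : c != 0 -> \sum_(x : F) twisted_char x c = W.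
Proof.
move=> c_neq0; have cA_neq0 : (c%:A : F) != 0 by rewrite -in_algE fmorph_eq0.
rewrite /WLd [RHS](reindex_inj (mulfI cA_neq0)); apply: eq_bigr => x _ /=.
by rewrite /twisted_char exprMn -!in_algE -rmorphXn exprd_base mulrA -rmorphM.
Qed.

Lemma double_sum_twisted_char :
  \sum_c \sum_(x : F) twisted_char x c = (q * q)%:R + W *+ q.-1.
Proof.
rewrite (bigD1 0) // -card_quadratic_ext; congr (_ + _).
  rewrite (eq_bigr (fun _ => 1)) => [|x _]; last exact: twisted_char0.
  exact: sumr_const.
rewrite (eq_bigr (fun _ => W)) => [|c]; last exact: sum_twisted_char.
by rewrite sumr_const cardC1.
Qed.

Lemma double_sum_twisted_char_trivial :
  \sum_c \sum_(x : F) twisted_char x c = (q * #|trivial_points|)%:R.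
Proof.
rewrite exchange_big (eq_bigr _ (fun x _ => sum_additive_char (twisted_charD x))).
by rewrite -big_mkcond sumr_const natrM mulr_natr cardsE.
Qed.

Lemma WLd_quadratic_ge0 : 0 <= W.
Proof.
have trivial_ge : (q <= #|trivial_points|)%N.
  apply: leq_trans card_conj_opp_ge (subset_leq_card _); apply/subsetP => x.
  by rewrite !inE => /eqP xq; apply/forallP => c; rewrite twisted_char_conj_opp.
have W_mul : W *+ q.-1 = (q * #|trivial_points| - q * q)%:R.
  rewrite natrB ?leq_mul2l ?trivial_ge ?orbT // -double_sum_twisted_char_trivial.
  by rewrite double_sum_twisted_char addrC addKr.
have q1_gt0 : (0 : R[i]) < q.-1%:R by rewrite ltr0n -subn1 subn_gt0 finNzRing_gt1.
by rewrite -(pmulr_lge0 _ q1_gt0) mulr_natr W_mul ler0n.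
Qed.

End QuadraticExtension.

Theorem corollary4p5 (R : realType) (K : finFieldType) (L : fieldExtType K)
    (p : nat) (charKp : p \in [pchar K])
    (hquad : \dim {: L} = 2%N)
    (d : nat) (hgcd : coprime d (#|FinFieldExtType L| - 1))
    (hdeg : exists j : nat, d = p ^ j %[mod #|K| - 1])
    (a : K) :
  0 <= @WLd R p (FinFieldExtType L) d (a%:A : FinFieldExtType L).
Proof.
have [j d_mod] := hdeg.
have d_gt0 : (0 < d)%N.
  have sq_gt3 : (3 < #|K| * #|K|)%N := leq_mul (finNzRing_gt1 K) (finNzRing_gt1 K).
  rewrite lt0n; apply: contraTneq hgcd => ->.
  by rewrite /coprime gcd0n (card_quadratic_ext hquad); lia.
apply: (WLd_quadratic_ge0 _ charKp hquad _ (oppr1_expr_coprime hgcd)) => c.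
rewrite (expr_modn_card1 _ d_gt0 _ d_mod) // expn_gt0.
by rewrite prime_gt0 ?(pcharf_prime charKp).
Qed.
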